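(* If $L$ is a finite modular i--lattice, in particular if $L$ is a finite De Morgan algebra, in particular if $L$ is a finite Kleene algebra, then ${\rm Con}_{\mathbb{BI}}(L)$ is a Boolean algebra; in particular its cardinality is a natural power of $2$.
   Context: An i--lattice is a lattice $L$ with a unary operation $'$ such that $a''=a$ and $a\leq b$ implies $b'\leq a'$. A De Morgan algebra is a distributive bounded i--lattice; a Kleene algebra is a De Morgan algebra satisfying $a\wedge a'\leq b\vee b'$ for all $a,b$. ${\rm Con}_{\mathbb{BI}}(L)$ is the lattice of congruences of $L$ with respect to $\vee,\wedge,'$ (and the bounds, which does not change the congruences), i.e. lattice congruences $\theta$ such that $(a,b)\in\theta$ implies $(a',b')\in\theta$. *)

From HB Require Import structures.
From mathcomp Require Import all_boot all_order.
Set Implicit Arguments. Unset Strict Implicit. Unset Printing Implicit Defensive.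
Import Order.Theory.
Local Open Scope order_scope.

Definition modular_lattice d (L : latticeType d) : Prop :=
  forall a b c : L, a <= c -> a `|` (b `&` c) = (a `|` b) `&` c.

Definition i_lattice_inv d (L : latticeType d) (inv : L -> L) : Prop :=
  involutive inv /\ (forall a b : L, a <= b -> inv b <= inv a).

Definition bi_congruence d (L : finLatticeType d) (inv : L -> L)
    (th : {set L * L}) : bool :=
  [&& [forall x : L, (x, x) \in th],
      [forall x : L, forall y : L, ((x, y) \in th) ==> ((y, x) \in th)],
      [forall x : L, forall y : L, forall z : L,
         ((x, y) \in th) && ((y, z) \in th) ==> ((x, z) \in th)],
      [forall a : L, forall b : L, forall c : L, forall e : L,
         ((a, b) \in th) && ((c, e) \in th) ==>
           ((a `|` c, b `|` e) \in th) && ((a `&` c, b `&` e) \in th)] &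
      [forall a : L, forall b : L, ((a, b) \in th) ==> ((inv a, inv b) \in th)]].

Definition Con_BI d (L : finLatticeType d) (inv : L -> L) : {set {set L * L}} :=
  [set th : {set L * L} | bi_congruence inv th].

Section SetPoset.
Variable U : finType.
Variable S : {set {set U}}.

Definition is_lub (X Y J : {set U}) : Prop :=
  [/\ J \in S, X \subset J, Y \subset J &
      forall Z, Z \in S -> X \subset Z -> Y \subset Z -> J \subset Z].

Definition is_glb (X Y M : {set U}) : Prop :=
  [/\ M \in S, M \subset X, M \subset Y &
      forall Z, Z \in S -> Z \subset X -> Z \subset Y -> Z \subset M].

Definition is_boolean_lattice : Prop :=
  [/\ (forall X Y, X \in S -> Y \in S -> exists J, is_lub X Y J),
      (forall X Y, X \in S -> Y \in S -> exists M, is_glb X Y M),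
      (forall X Y Z YZ M XY XZ J,
          X \in S -> Y \in S -> Z \in S ->
          is_lub Y Z YZ -> is_glb X YZ M ->
          is_glb X Y XY -> is_glb X Z XZ -> is_lub XY XZ J -> M = J) &
      exists bot top,
        [/\ bot \in S, top \in S,
            (forall X, X \in S -> bot \subset X /\ X \subset top) &
            (forall X, X \in S -> exists2 X', X' \in S &
                 is_glb X X' bot /\ is_lub X X' top)]].
End SetPoset.

From HB Require Import structures.
From mathcomp Require Import all_boot all_order.
Set Implicit Arguments. Unset Strict Implicit. Unset Printing Implicit Defensive.
Import Order.Theory.
Local Open Scope order_scope.

(* A congruence of a finite lattice is determined by the prime quotients
   (covering pairs) it collapses: it relates x and y iff it collapses every
   prime quotient of [x `&` y, x `|` y].  In a modular lattice every prime
   quotient of an interval [x, z] transposes, up or down, into [x, y] or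
   [y, z] for any y in between; hence a set of prime quotients comes from a
   congruence exactly when it is closed under transposition and under the
   involution.  Such sets are closed under intersection and relative
   complement, so restriction to prime quotients is an order isomorphism from
   Con_BI(L) onto a Boolean algebra of sets, which has 2 ^ (number of atoms)
   elements. *)

Section BooleanSetAlgebra.

Variables (T : finType) (W : {set T}) (F : {set {set T}}).
Hypotheses (F_sub : {in F, forall Q : {set T}, Q \subset W}) (W_in : W \in F)
  (F_setD : {in F, forall Q : {set T}, W :\: Q \in F})
  (F_setI : {in F &, forall Q R : {set T}, Q :&: R \in F}).

Lemma set0_in_algebra : set0 \in F.
Proof. by rewrite -(setDv W) F_setD. Qed.

Lemma setU_in_algebra : {in F &, forall Q R : {set T}, Q :|: R \in F}.
Proof.
move=> Q R QF RF; have -> : Q :|: R = W :\: ((W :\: Q) :&: (W :\: R)).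
  by rewrite setDIr !setDDr !setDv !set0U !(setIidPr (F_sub _)).
by rewrite F_setD ?F_setI ?F_setD.
Qed.

(* For [u] outside [W] the range is empty and [atom u = W]. *)
Definition atom (u : T) : {set T} := \big[@setI T/W]_(Q in F | u \in Q) Q.

Lemma atom_in_algebra u : atom u \in F.
Proof.
rewrite /atom; apply: (big_ind (fun Q => Q \in F)) => [//| Q R QF RF | Q /andP[] //].
exact: F_setI.
Qed.

Lemma atom_min u Q : Q \in F -> u \in Q -> atom u \subset Q.
Proof. by move=> QF uQ; rewrite /atom (bigD1 Q) ?QF //= subsetIl. Qed.

Lemma mem_atom u : u \in W -> u \in atom u.
Proof.
move=> uW; rewrite /atom; elim/big_ind: _ => // [Q R|Q /andP[] //].
by rewrite inE => ->.
Qed.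

Lemma atom_eq u v : u \in W -> v \in atom u -> atom v = atom u.
Proof.
move=> uW vu; have vW : v \in W := subsetP (F_sub (atom_in_algebra u)) v vu.
apply/eqP; rewrite eqEsubset atom_min ?atom_in_algebra //=.
have [uv | uNv] := boolP (u \in atom v); first by rewrite atom_min ?atom_in_algebra.
have : atom u \subset W :\: atom v.
  by rewrite atom_min ?F_setD ?atom_in_algebra // inE uNv.
by move/subsetP/(_ v vu); rewrite inE mem_atom.
Qed.

Definition atoms : {set {set T}} := [set atom u | u in W].

Lemma bigcup_in_algebra (S : {set {set T}}) : S \subset F -> \bigcup_(A in S) A \in F.
Proof.
move=> /subsetP SF; elim/big_ind: _ => [|Q R|Q /SF //]; first exact: set0_in_algebra.
exact: setU_in_algebra.
Qed.

Lemma atom_decomposition Q :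
  Q \in F -> Q = \bigcup_(A in [set A in atoms | A \subset Q]) A.
Proof.
move=> QF; apply/eqP; rewrite eqEsubset; apply/andP; split.
  apply/subsetP => u uQ; have uW := subsetP (F_sub QF) u uQ.
  apply/bigcupP; exists (atom u); last exact: mem_atom.
  by rewrite inE imset_f // atom_min.
by apply/bigcupsP => A; rewrite inE => /andP[].
Qed.

Lemma atoms_sub_algebra : atoms \subset F.
Proof. by apply/subsetP => _ /imsetP[u _ ->]; apply: atom_in_algebra. Qed.

Lemma bigcup_atoms_inj :
  {in powerset atoms &, injective (fun S : {set {set T}} => \bigcup_(A in S) A)}.
Proof.
suff sub (S1 S2 : {set {set T}}) : S1 \subset atoms -> S2 \subset atoms ->
    \bigcup_(A in S1) A = \bigcup_(A in S2) A -> S1 \subset S2.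
  move=> S1 S2; rewrite !inE => S1a S2a E.
  by apply/eqP; rewrite eqEsubset (sub S1 S2) ?(sub S2 S1).
move=> /subsetP S1a S2a E; apply/subsetP => A AS1.
have /imsetP[u uW Au] := S1a A AS1.
have : u \in \bigcup_(A in S2) A.
  by rewrite -E; apply/bigcupP; exists A; rewrite // Au mem_atom.
case/bigcupP => B BS2 uB; have /imsetP[v vW Bv] := subsetP S2a B BS2.
by rewrite Au (atom_eq vW) -Bv.
Qed.

Lemma card_boolean_set_algebra : #|F| = 2 ^ #|atoms|.
Proof.
rewrite -card_powerset -(card_in_imset bigcup_atoms_inj).
apply: eq_card => Q; apply/idP/imsetP => [QF | [S]].
  exists [set A in atoms | A \subset Q]; last exact: atom_decomposition.
  by rewrite inE; apply/subsetP => A; rewrite inE => /andP[].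
by rewrite inE => Sa ->; apply/bigcup_in_algebra/(subset_trans Sa atoms_sub_algebra).
Qed.

Variables (T' : finType) (S : {set {set T'}}) (f : {set T'} -> {set T}).
Hypotheses (f_subset : {in S &, forall X Y, (f X \subset f Y) = (X \subset Y)})
  (F_image : F = f @: S).

Lemma embedding_inj : {in S &, injective f}.
Proof.
by move=> X Y XS YS fXY; apply/eqP; rewrite eqEsubset -!f_subset // fXY subxx.
Qed.

Lemma card_embedded : #|S| = 2 ^ #|atoms|.
Proof.
by rewrite -card_boolean_set_algebra F_image card_in_imset //; apply: embedding_inj.
Qed.

Lemma algebra_preimage Q : Q \in F -> exists2 X, X \in S & f X = Q.
Proof. by rewrite F_image => /imsetP[X XS ->]; exists X. Qed.

Lemma embedded_in X : X \in S -> f X \in F.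
Proof. by move=> XS; rewrite F_image imset_f. Qed.

Lemma is_lub_of_image X Y J :
  X \in S -> Y \in S -> J \in S -> f J = f X :|: f Y -> is_lub S X Y J.
Proof.
move=> XS YS JS fJ; split; rewrite -?f_subset ?fJ ?subsetUl ?subsetUr //.
by move=> Z ZS XZ YZ; rewrite -f_subset // fJ subUset !f_subset ?XZ.
Qed.

Lemma is_glb_of_image X Y M :
  X \in S -> Y \in S -> M \in S -> f M = f X :&: f Y -> is_glb S X Y M.
Proof.
move=> XS YS MS fM; split; rewrite -?f_subset ?fM ?subsetIl ?subsetIr //.
by move=> Z ZS ZX ZY; rewrite -f_subset // fM subsetI !f_subset ?ZX.
Qed.

Lemma image_of_is_lub X Y J :
  X \in S -> Y \in S -> is_lub S X Y J -> f J = f X :|: f Y.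
Proof.
move=> XS YS [JS XJ YJ Jmin].
have [J' J'S fJ'] := algebra_preimage (setU_in_algebra (embedded_in XS) (embedded_in YS)).
apply/eqP; rewrite eqEsubset subUset !f_subset // XJ YJ andbT -fJ' f_subset // andbT.
by case: (is_lub_of_image XS YS J'S fJ') => _ XJ' YJ' _; apply: Jmin.
Qed.

Lemma image_of_is_glb X Y M :
  X \in S -> Y \in S -> is_glb S X Y M -> f M = f X :&: f Y.
Proof.
move=> XS YS [MS MX MY Mmax].
have [M' M'S fM'] := algebra_preimage (F_setI (embedded_in XS) (embedded_in YS)).
apply/eqP; rewrite eqEsubset subsetI !f_subset // MX MY /= -fM' f_subset //.
by case: (is_glb_of_image XS YS M'S fM') => _ M'X M'Y _; apply: Mmax.
Qed.

Lemma is_boolean_lattice_embedded : is_boolean_lattice S.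
Proof.
have [bot botS fbot] := algebra_preimage set0_in_algebra.
have [top topS ftop] := algebra_preimage W_in.
split.
- move=> X Y XS YS.
  have [J JS fJ] := algebra_preimage (setU_in_algebra (embedded_in XS) (embedded_in YS)).
  by exists J; apply: is_lub_of_image.
- move=> X Y XS YS.
  have [M MS fM] := algebra_preimage (F_setI (embedded_in XS) (embedded_in YS)).
  by exists M; apply: is_glb_of_image.
- move=> X Y Z YZ M XY XZ J XS YS ZS lubYZ glbM glbXY glbXZ lubJ.
  have [YZS _ _ _] := lubYZ; have [XYS _ _ _] := glbXY; have [XZS _ _ _] := glbXZ.
  have [MS _ _ _] := glbM; have [JS _ _ _] := lubJ.
  apply: embedding_inj => //.
  rewrite (image_of_is_glb XS YZS glbM) (image_of_is_lub YS ZS lubYZ).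
  rewrite (image_of_is_lub XYS XZS lubJ) (image_of_is_glb XS YS glbXY).
  by rewrite (image_of_is_glb XS ZS glbXZ) setIUr.
- exists bot, top; split => // X XS.
    by rewrite -!f_subset // fbot ftop sub0set F_sub ?embedded_in.
  have [X' X'S fX'] := algebra_preimage (F_setD (embedded_in XS)).
  exists X' => //; split; first apply: is_glb_of_image => //.
    by rewrite fbot fX' setIDA setDIl setDv set0I.
  apply: is_lub_of_image => //.
  by rewrite ftop fX' -{1}(setIidPr (F_sub (embedded_in XS))) setID.
Qed.

End BooleanSetAlgebra.

Section PrimeQuotients.

Variables (disp : Order.disp_t) (L : finLatticeType disp).
Implicit Types (Q th : {set L * L}) (a b c e x y z : L).

Definition covered_by a b : bool := (a < b) && [forall x, ~~ (a < x < b)].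

Lemma covered_byP a b :
  reflect (a < b /\ forall x, a <= x -> x <= b -> x = a \/ x = b) (covered_by a b).
Proof.
apply: (iffP andP) => -[ab cov]; split=> //.
  move=> x /[swap]; rewrite !le_eqVlt => /orP[/eqP-> | xb]; first by right.
  case/orP => [/eqP-> | ax]; first by left.
  by have := forallP cov x; rewrite ax xb.
apply/forallP => x; apply/negP => /andP[ax xb].
by case: (cov x (ltW ax) (ltW xb)) => E; [rewrite E ltxx in ax | rewrite E ltxx in xb].
Qed.

Lemma covered_by_le a b : covered_by a b -> a <= b.
Proof. by case/andP => /ltW. Qed.

Lemma covered_by_cases c e y :
  covered_by c e -> (e `&` y <= c) || (e <= c `|` y).
Proof.
case/covered_byP => ce cov.
have le_e : c `|` (e `&` y) <= e by rewrite leUx (ltW ce) leIl.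
have [E|E] := cov _ (leUl _ _) le_e.
  by rewrite -{1}E leUr.
by apply/orP; right; rewrite -{1}E leU2 ?leIr.
Qed.

Definition covering : {set L * L} := [set p | covered_by p.1 p.2].

Definition collapses Q x y : Prop :=
  forall c e, x <= c -> e <= y -> covered_by c e -> (c, e) \in Q.

Lemma collapses_sub Q x y x' y' :
  collapses Q x y -> x <= x' -> y' <= y -> collapses Q x' y'.
Proof.
by move=> C xx yy c e xc ey; apply: C; [apply: le_trans xc | apply: le_trans yy].
Qed.

Lemma le_meet_join x y : x `&` y <= x `|` y.
Proof. exact: le_trans (leIl x y) (leUl x y). Qed.

Definition con_of Q : {set L * L} :=
  [set p | [forall c, forall e,
     [&& p.1 `&` p.2 <= c, e <= p.1 `|` p.2 & covered_by c e] ==> ((c, e) \in Q)]].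

Lemma con_ofP Q x y : reflect (collapses Q (x `&` y) (x `|` y)) ((x, y) \in con_of Q).
Proof.
rewrite inE; apply: (iffP 'forall_'forall_implyP) => /= C c e.
  by move=> xc ey ce; apply: C; rewrite xc ey ce.
by case/and3P; apply: C.
Qed.

Lemma con_of_mono Q1 Q2 : Q1 \subset Q2 -> con_of Q1 \subset con_of Q2.
Proof.
move=> /subsetP sQ; apply/subsetP => -[x y] /con_ofP C; apply/con_ofP.
by move=> c e xc ey ce; apply/sQ/C.
Qed.

Lemma mem_con_of_covered Q a b : covered_by a b -> ((a, b) \in con_of Q) = ((a, b) \in Q).
Proof.
move=> ab; have ab_le := covered_by_le ab.
apply/con_ofP/idP; rewrite (meet_l ab_le) (join_r ab_le); first by move=> C; apply: C.
move=> abQ c e ac eb /covered_byP[ce _]; case/covered_byP: ab => _ cov.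
have [Ec|Ec] := cov c ac (le_trans (ltW ce) eb).
  have [Ee|Ee] := cov e (le_trans ac (ltW ce)) eb; last by rewrite Ec Ee.
  by rewrite Ec Ee ltxx in ce.
by move: (lt_le_trans ce eb); rewrite Ec ltxx.
Qed.

Lemma restrict_con_of Q : Q \subset covering -> con_of Q :&: covering = Q.
Proof.
move=> /subsetP sQ; apply/setP => -[a b]; rewrite in_setI [_ \in covering]inE /=.
case ab: (covered_by a b); first by rewrite andbT mem_con_of_covered.
by rewrite andbF; apply/esym/negbTE/negP => /sQ; rewrite inE ab.
Qed.

Hypothesis L_modular : modular_lattice L.

Lemma covered_by_perspective_up b c : covered_by (b `&` c) b -> covered_by c (b `|` c).
Proof.
case/covered_byP => lt_bcb cov; apply/covered_byP; split.
  rewrite lt_def leUr andbT; apply: contraTneq lt_bcb => E.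
  by rewrite meet_l ?ltxx // -E leUl.
move=> x cx xbc.
have bc_le : b `&` c <= x `&` b by rewrite lexI leIl (le_trans (leIr _ _) cx).
have [E|E] := cov _ bc_le (leIr _ _).
  have xE : x = (c `|` b) `&` x by rewrite joinC meet_r.
  by left; rewrite xE -L_modular // meetC E joinC meetUK.
by right; apply/le_anti; rewrite xbc leUx cx -E leIl.
Qed.

Lemma covered_by_perspective_down b c : covered_by c (b `|` c) -> covered_by (b `&` c) b.
Proof.
case/covered_byP => lt_cbc cov; apply/covered_byP; split.
  rewrite lt_def leIl andbT; apply: contraTneq lt_cbc => E.
  by rewrite join_r ?ltxx // {1}E leIr.
move=> x bcx xb.
have [E|E] := cov (x `|` c) (leUr _ _) (leU2 xb (lexx c)).
  by left; apply/le_anti; rewrite bcx lexI xb -E leUl.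
have bE : b = (x `|` c) `&` b by rewrite E joinC joinIK.
by right; rewrite bE -L_modular // meetC join_l.
Qed.

Definition perspective_closed Q : Prop :=
  forall b c, covered_by (b `&` c) b -> covered_by c (b `|` c) ->
    ((b `&` c, b) \in Q) = ((c, b `|` c) \in Q).

Section Collapse.

Variable Q : {set L * L}.
Hypothesis Q_persp : perspective_closed Q.

Lemma transpose_up c e y :
  covered_by c e -> e `&` y <= c ->
  covered_by (c `|` y) (e `|` y) /\ ((c `|` y, e `|` y) \in Q) = ((c, e) \in Q).
Proof.
move=> ce eyc; have ce_le := covered_by_le ce.
have E : e `&` (c `|` y) = c by rewrite meetC -L_modular // meetC join_l.
have J : e `|` (c `|` y) = e `|` y by rewrite joinA (join_l ce_le).
have ce' : covered_by (e `&` (c `|` y)) e by rewrite E.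
have up := covered_by_perspective_up ce'.
by move: (Q_persp ce' up); rewrite E J in up * => ->.
Qed.

Lemma transpose_down c e y :
  covered_by c e -> e <= c `|` y ->
  covered_by (c `&` y) (e `&` y) /\ ((c `&` y, e `&` y) \in Q) = ((c, e) \in Q).
Proof.
move=> ce ecy; have ce_le := covered_by_le ce.
have E : (e `&` y) `|` c = e by rewrite joinC meetC L_modular // meet_r.
have M : (e `&` y) `&` c = c `&` y by rewrite meetAC (meet_r ce_le).
have ce' : covered_by c ((e `&` y) `|` c) by rewrite E.
have down := covered_by_perspective_down ce'.
by move: (Q_persp down ce'); rewrite M E in down * => ->.
Qed.

Lemma collapses_trans x y z :
  x <= y -> y <= z -> collapses Q x y -> collapses Q y z -> collapses Q x z.
Proof.
move=> xy yz Cxy Cyz c e xc ez ce.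
case/orP: (covered_by_cases y ce) => [eyc | ecy].
  have [ce' <-] := transpose_up ce eyc.
  by apply: Cyz ce'; rewrite ?leUr // leUx ez.
have [ce' <-] := transpose_down ce ecy.
by apply: Cxy ce'; rewrite ?leIr // lexI xc.
Qed.

Lemma collapses_joinr x y z : x <= y -> collapses Q x y -> collapses Q (x `|` z) (y `|` z).
Proof.
move=> xy Cxy c e + eyz ce; rewrite leUx => /andP[xc zc].
have ecy : e <= c `|` y by rewrite (le_trans eyz) // joinC leU2.
have [ce' <-] := transpose_down ce ecy.
by apply: Cxy ce'; rewrite ?leIr // lexI xc.
Qed.

Lemma collapses_meetr x y z : x <= y -> collapses Q x y -> collapses Q (x `&` z) (y `&` z).
Proof.
move=> xy Cxy c e xzc; rewrite lexI => /andP[ey ez] ce.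
have exc : e `&` x <= c by rewrite (le_trans _ xzc) // meetC leI2.
have [ce' <-] := transpose_up ce exc.
by apply: Cxy ce'; rewrite ?leUr // leUx ey.
Qed.

Lemma collapses_overlap a b c e y :
  a <= y -> y <= b -> c <= y -> y <= e ->
  collapses Q a b -> collapses Q c e -> collapses Q (a `&` c) (b `|` e).
Proof.
move=> ay yb cy ye Cab Cce; have ab := le_trans ay yb; have ce := le_trans cy ye.
have Cc : collapses Q (a `&` c) c.
  apply: collapses_sub (collapses_meetr (z := c) ab Cab) (lexx _) _.
  by rewrite lexI lexx (le_trans cy yb).
have Ce : collapses Q e (b `|` e).
  apply: collapses_sub (collapses_joinr (z := e) ab Cab) _ (lexx _).
  by rewrite leUx lexx (le_trans ay ye).
have ace : a `&` c <= e := le_trans (leIr _ _) ce.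
exact: collapses_trans ace (leUr _ _) (collapses_trans (leIr _ _) ce Cc Cce) Ce.
Qed.

Lemma con_of_trans x y z :
  (x, y) \in con_of Q -> (y, z) \in con_of Q -> (x, z) \in con_of Q.
Proof.
move=> /con_ofP Cxy /con_ofP Cyz; apply/con_ofP.
have C := collapses_overlap (leIr _ _) (leUr _ _) (leIl _ _) (leUl _ _) Cxy Cyz.
by apply: collapses_sub C _ _; [apply: leI2 | apply: leU2]; rewrite ?leIl ?leIr ?leUl ?leUr.
Qed.

Lemma con_of_joinr x y z : (x, y) \in con_of Q -> (x `|` z, y `|` z) \in con_of Q.
Proof.
move=> /con_ofP C; apply/con_ofP.
apply: collapses_sub (collapses_joinr (z := z) (le_meet_join x y) C) _ _.
  by rewrite lexI !leU2 ?leIl ?leIr.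
by rewrite leUx !leU2 ?leUl ?leUr.
Qed.

Lemma con_of_meetr x y z : (x, y) \in con_of Q -> (x `&` z, y `&` z) \in con_of Q.
Proof.
move=> /con_ofP C; apply/con_ofP.
apply: collapses_sub (collapses_meetr (z := z) (le_meet_join x y) C) _ _.
  by rewrite lexI !leI2 ?leIl ?leIr.
by rewrite leUx !leI2 ?leUl ?leUr.
Qed.

End Collapse.

Variable inv : L -> L.
Hypothesis inv_i : i_lattice_inv inv.

Let invK : involutive inv := inv_i.1.

Lemma inv_le x y : (inv x <= inv y) = (y <= x).
Proof. by apply/idP/idP => [/inv_i.2|/inv_i.2 //]; rewrite !invK. Qed.

Lemma covered_by_inv a b : covered_by a b -> covered_by (inv b) (inv a).
Proof.
case/covered_byP => ab cov; apply/covered_byP; split.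
  by rewrite lt_def inv_le (ltW ab) andbT (inj_eq (can_inj invK)) lt_eqF.
move=> x bx xa; have ax : a <= inv x by rewrite -inv_le invK.
have xb : inv x <= b by rewrite -inv_le invK.
by case: (cov _ ax xb) => <-; rewrite invK; [right | left].
Qed.

Definition inv_closed Q : Prop :=
  forall a b, covered_by a b -> ((inv b, inv a) \in Q) = ((a, b) \in Q).

Lemma collapses_inv Q x y : inv_closed Q -> collapses Q x y -> collapses Q (inv y) (inv x).
Proof.
move=> Qi C c e yc ex ce; have ce' := covered_by_inv ce.
by move: (Qi _ _ ce'); rewrite !invK => ->; apply: C ce'; rewrite -inv_le invK.
Qed.

Record is_congruence th : Prop := IsCongruence {
  con_refl : forall x, (x, x) \in th;
  con_sym : forall x y, (x, y) \in th -> (y, x) \in th;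
  con_trans : forall x y z, (x, y) \in th -> (y, z) \in th -> (x, z) \in th;
  con_join : forall a b c e, (a, b) \in th -> (c, e) \in th -> (a `|` c, b `|` e) \in th;
  con_meet : forall a b c e, (a, b) \in th -> (c, e) \in th -> (a `&` c, b `&` e) \in th;
  con_inv : forall a b, (a, b) \in th -> (inv a, inv b) \in th }.

Lemma bi_congruenceP th : reflect (is_congruence th) (bi_congruence inv th).
Proof.
apply: (iffP and5P) => [[] | [r s t j m i]].
  move=> /forallP r /'forall_'forall_implyP s /'forall_'forall_'forall_implyP t.
  move=> /'forall_'forall_'forall_'forall_implyP jm /'forall_'forall_implyP i.
  split=> // [x y z xy yz | a b c e ab ce | a b c e ab ce].
  - by apply: (t x y z); rewrite xy yz.
  - by move: (jm a b c e); rewrite ab ce => /(_ isT)/andP[].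
  - by move: (jm a b c e); rewrite ab ce => /(_ isT)/andP[].
split; first exact/forallP.
- exact/'forall_'forall_implyP.
- by apply/'forall_'forall_'forall_implyP => x y z /andP[]; apply: t.
- by apply/'forall_'forall_'forall_'forall_implyP => a b c e /andP[ab ce]; rewrite j ?m.
- exact/'forall_'forall_implyP.
Qed.

Lemma con_of_congruence Q :
  perspective_closed Q -> inv_closed Q -> is_congruence (con_of Q).
Proof.
move=> Qp Qi; have trans := con_of_trans Qp; split => //.
- move=> x; apply/con_ofP; rewrite meetxx joinxx => c e xc ex /covered_byP[ce _].
  by move: (lt_le_trans ce (le_trans ex xc)); rewrite ltxx.
- by move=> x y /con_ofP C; apply/con_ofP; rewrite meetC joinC.
- move=> a b c e ab ce; apply: (trans _ (b `|` c)); first exact: con_of_joinr.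
  by rewrite ![b `|` _]joinC; apply: con_of_joinr.
- move=> a b c e ab ce; apply: (trans _ (b `&` c)); first exact: con_of_meetr.
  by rewrite ![b `&` _]meetC; apply: con_of_meetr.
- move=> a b /con_ofP C; apply/con_ofP; apply: collapses_sub (collapses_inv Qi C) _ _.
    by rewrite lexI !inv_le leUl leUr.
  by rewrite leUx !inv_le leIl leIr.
Qed.

Lemma con_meet_join th x y :
  is_congruence th -> ((x `&` y, x `|` y) \in th) = ((x, y) \in th).
Proof.
case=> r s t j m _; apply/idP/idP => h.
  have := m _ _ _ _ h (r x); rewrite (meet_l (leIl x y)) (meet_r (leUl x y)) => hx.
  have := m _ _ _ _ h (r y); rewrite (meet_l (leIr _ _)) (meet_r (leUr _ _)) => hy.
  exact: t (s _ _ hx) hy.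
have := m _ _ _ _ h (r y); rewrite meetxx => hy.
have := j _ _ _ _ (s _ _ h) (r y); rewrite joinxx joinC => hxy.
exact: t hy hxy.
Qed.

Lemma con_convex th m M c e :
  is_congruence th -> (m, M) \in th -> m <= c -> c <= e -> e <= M -> (c, e) \in th.
Proof.
move=> thC h mc ce eM; have := con_join thC (con_refl thC c) h.
rewrite (join_l mc) (join_r (le_trans ce eM)) => hc.
by have := con_meet thC hc (con_refl thC e); rewrite (meet_l ce) (meet_r eM).
Qed.

Definition segment x y : {set L} := [set z | x <= z <= y].

Lemma card_segment_lt x y u v :
  x <= u -> u <= v -> v <= y -> (x < u) || (v < y) -> (#|segment u v| < #|segment x y|)%N.
Proof.
move=> xu uv vy strict; apply: proper_card; apply/properP; split.
  apply/subsetP => z; rewrite !inE => /andP[uz zv].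
  by rewrite (le_trans xu uz) (le_trans zv vy).
have xy := le_trans xu (le_trans uv vy).
by case/orP: strict => [xu' | vy']; [exists x | exists y];
  rewrite !inE ?lexx ?xy ?(lt_geF xu') ?(lt_geF vy') ?andbF.
Qed.

Lemma collapses_con th m M :
  is_congruence th -> m <= M -> collapses th m M -> (m, M) \in th.
Proof.
move=> thC; have [n] := ubnP #|segment m M|; elim: n m M => // n IH m M.
rewrite ltnS => size_mM mM C; have [<-|neq] := eqVneq m M; first exact: con_refl.
have lt_mM : m < M by rewrite lt_neqAle neq mM.
have [mM_cov|] := boolP (covered_by m M); first exact: C.
rewrite /covered_by lt_mM => /forallPn[e]; rewrite negbK => /andP[me eM].
apply: (con_trans thC (y := e)); apply: IH.
- by apply: leq_trans size_mM; rewrite card_segment_lt ?lexx ?ltW ?eM ?orbT.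
- exact: ltW.
- exact: collapses_sub C (lexx m) (ltW eM).
- by apply: leq_trans size_mM; rewrite card_segment_lt ?lexx ?ltW ?me.
- exact: ltW.
- exact: collapses_sub C (ltW me) (lexx M).
Qed.

Lemma con_of_restrict th : is_congruence th -> con_of (th :&: covering) = th.
Proof.
move=> thC; apply/setP => -[x y]; rewrite -(con_meet_join _ _ thC).
apply/con_ofP/idP => [C | h c e xc ey ce].
  apply: collapses_con (le_meet_join x y) _ => // c e xc ey ce.
  by have /setIP[] := C c e xc ey ce.
by apply/setIP; split; [apply: con_convex thC h xc (covered_by_le ce) ey | rewrite inE].
Qed.

Lemma perspective_closed_con th : is_congruence th -> perspective_closed th.
Proof.
move=> thC b c _ _; apply/idP/idP => h.
  by have := con_join thC h (con_refl thC c); rewrite meetUK.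
by have := con_meet thC h (con_refl thC b); rewrite meetC (meet_r (leUl _ _)).
Qed.

Lemma inv_closed_con th : is_congruence th -> inv_closed th.
Proof.
move=> thC a b _; apply/idP/idP => h; last exact/(con_sym thC)/(con_inv thC).
by move/(con_inv thC): h; rewrite !invK => /(con_sym thC).
Qed.

Lemma perspective_closed_covering : perspective_closed covering.
Proof. by move=> b c bc cb; rewrite !inE bc cb. Qed.

Lemma perspective_closedI Q1 Q2 :
  perspective_closed Q1 -> perspective_closed Q2 -> perspective_closed (Q1 :&: Q2).
Proof. by move=> h1 h2 b c bc cb; rewrite !inE h1 ?h2. Qed.

Lemma perspective_closedD Q1 Q2 :
  perspective_closed Q1 -> perspective_closed Q2 -> perspective_closed (Q1 :\: Q2).
Proof. by move=> h1 h2 b c bc cb; rewrite !inE h1 ?h2. Qed.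

Lemma inv_closed_covering : inv_closed covering.
Proof. by move=> a b ab; rewrite !inE /= ab covered_by_inv. Qed.

Lemma inv_closedI Q1 Q2 : inv_closed Q1 -> inv_closed Q2 -> inv_closed (Q1 :&: Q2).
Proof. by move=> h1 h2 a b ab; rewrite !inE h1 ?h2. Qed.

Lemma inv_closedD Q1 Q2 : inv_closed Q1 -> inv_closed Q2 -> inv_closed (Q1 :\: Q2).
Proof. by move=> h1 h2 a b ab; rewrite !inE h1 ?h2. Qed.

Definition con_quotients : {set {set L * L}} := [set th :&: covering | th in Con_BI inv].

Lemma con_quotientsP Q :
  Q \in con_quotients <-> [/\ Q \subset covering, perspective_closed Q & inv_closed Q].
Proof.
split => [/imsetP[th + ->] | [Qc Qp Qi]].
  rewrite inE => /bi_congruenceP thC; split; first exact: subsetIr.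
    exact: perspective_closedI (perspective_closed_con thC) perspective_closed_covering.
  exact: inv_closedI (inv_closed_con thC) inv_closed_covering.
apply/imsetP; exists (con_of Q); last by rewrite restrict_con_of.
by rewrite inE; apply/bi_congruenceP/con_of_congruence.
Qed.

Lemma con_quotients_sub : {in con_quotients, forall Q, Q \subset covering}.
Proof. by move=> _ /imsetP[th _ ->]; apply: subsetIr. Qed.

Lemma covering_in_con_quotients : covering \in con_quotients.
Proof.
by apply/con_quotientsP; split; [exact: subxx | exact: perspective_closed_covering |
  exact: inv_closed_covering].
Qed.

Lemma con_quotientsD : {in con_quotients, forall Q, covering :\: Q \in con_quotients}.
Proof.
move=> Q /con_quotientsP[_ Qp Qi]; apply/con_quotientsP; split; first exact: subsetDl.
  exact: perspective_closedD perspective_closed_covering Qp.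
exact: inv_closedD inv_closed_covering Qi.
Qed.

Lemma con_quotientsI : {in con_quotients &, forall Q R, Q :&: R \in con_quotients}.
Proof.
move=> Q R /con_quotientsP[Qc Qp Qi] /con_quotientsP[_ Rp Ri]; apply/con_quotientsP.
by split; [exact: subset_trans (subsetIl Q R) Qc | exact: perspective_closedI |
  exact: inv_closedI].
Qed.

Lemma restrict_covering_subset :
  {in Con_BI inv &, forall X Y, (X :&: covering \subset Y :&: covering) = (X \subset Y)}.
Proof.
move=> X Y; rewrite !inE => /bi_congruenceP XC /bi_congruenceP YC.
apply/idP/idP => [XYc | XY]; last exact: setSI.
by rewrite -(con_of_restrict XC) -(con_of_restrict YC) con_of_mono.
Qed.

End PrimeQuotients.

Theorem corollary4p9 (d : Order.disp_t) (L : finLatticeType d) (inv : L -> L) :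
  modular_lattice L -> i_lattice_inv inv ->
  is_boolean_lattice (Con_BI inv) /\ exists n : nat, #|Con_BI inv| = (2 ^ n)%N.
Proof.
move=> L_mod inv_i.
have sub := @con_quotients_sub _ L inv.
have cov := covering_in_con_quotients L_mod inv_i.
have D := con_quotientsD L_mod inv_i.
have I := con_quotientsI L_mod inv_i.
have restrict_subset := @restrict_covering_subset _ L inv.
split; first exact: (is_boolean_lattice_embedded sub cov D I
  (f := fun th => th :&: covering L) restrict_subset erefl).
by eexists; exact: (card_embedded sub cov D I
  (f := fun th => th :&: covering L) restrict_subset erefl).
Qed.
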